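(* Let $\Theta=\{\theta_1,\dots,\theta_N\}$ be a finite set of $N\ge 1$ distinct elements, and let $PES(\Theta)=\{A_{ij} : i=0,\dots,N;\ j=1,\dots,P(N,i)\}$ be its permutation event space, where $P(N,i)=\frac{N!}{(N-i)!}$. For $i\ge 0$ let $F(i)=\sum_{k=0}^{i}P(i,k)=\sum_{k=0}^{i}\frac{i!}{(i-k)!}$, and set $S=\sum_{i=1}^{N}P(N,i)\,(F(i)-1)$. Consider the entropy $$H_{RPS}(\mathscr{M})=-\sum_{i=1}^{N}\sum_{j=1}^{P(N,i)}\mathscr{M}(A_{ij})\log\left(\frac{\mathscr{M}(A_{ij})}{F(i)-1}\right)$$ as a function on the set of all permutation mass functions $\mathscr{M}$ on $PES(\Theta)$. Then $H_{RPS}(\mathscr{M})$ attains its maximum value if and only if $$\mathscr{M}(A_{ij})=\frac{F(i)-1}{S}\quad\text{for all } i=1,\dots,N,\ j=1,\dots,P(N,i).$$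
   Context: The permutation event space $PES(\Theta)$ is the set of all ordered tuples of distinct elements of $\Theta$ (including the empty tuple $\emptyset=A_{01}$): for each $i\in\{0,\dots,N\}$, the tuples of length $i$ are enumerated as $A_{i1},\dots,A_{i,P(N,i)}$, e.g. for $\Theta=\{\theta_1,\theta_2\}$, $PES(\Theta)=\{\emptyset,(\theta_1),(\theta_2),(\theta_1,\theta_2),(\theta_2,\theta_1)\}$. A permutation mass function (PMF) is a map $\mathscr{M}:PES(\Theta)\to[0,1]$ with $\mathscr{M}(\emptyset)=0$ and $\sum_{A\in PES(\Theta)}\mathscr{M}(A)=1$. The logarithm has a fixed base $b>1$, and the convention $0\log 0=0$ is used. *)

From HB Require Import structures.
From mathcomp Require Import all_boot all_order all_algebra.
From mathcomp Require Import reals exp.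
Set Implicit Arguments. Unset Strict Implicit. Unset Printing Implicit Defensive.
Import Order.TTheory GRing.Theory Num.Theory.
Local Open Scope ring_scope.

(* Permutation event space of a finite set T (with N = #|T|):
   all ordered tuples of distinct elements of T, of every length i = 0..N. *)
Definition PES (T : finType) : finType :=
  {i : 'I_(#|T|).+1 & {t : i.-tuple T | uniq t}}.

Definition pes_len (T : finType) (a : PES T) : nat := nat_of_ord (tag a).

Definition Pnk (n k : nat) : nat := n ^_ k.
Definition Fi (i : nat) : nat := (\sum_(k < i.+1) Pnk i k)%N.
Definition Ssum (N : nat) : nat := (\sum_(1 <= i < N.+1) Pnk N i * (Fi i - 1))%N.

Definition logb (R : realType) (b x : R) : R := ln x / ln b.

Definition is_PMF (R : realType) (T : finType) (M : PES T -> R) : Prop :=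
  [/\ forall a, 0 <= M a <= 1,
      forall a, pes_len a = 0%N -> M a = 0
    & \sum_(a : PES T) M a = 1].

(* H_RPS, with the convention 0 log 0 = 0 made explicit *)
Definition H_RPS (R : realType) (b : R) (T : finType) (M : PES T -> R) : R :=
  - \sum_(a : PES T | (0 < pes_len a)%N)
      (if M a == 0 then 0
       else M a * logb b (M a / ((Fi (pes_len a))%:R - 1))).

From HB Require Import structures.
From mathcomp Require Import all_boot all_order all_algebra.
From mathcomp Require Import reals exp.
From mathcomp Require Import ring lra zify.
Import Order.TTheory GRing.Theory Num.Theory.
Local Open Scope ring_scope.

(* With weights w(a) = F(|a|) - 1, whose sum over the nonempty events is S,
   ln b * H_RPS(M) = ln S + \sum_a M(a) ln (q(a) / M(a)) for q(a) = w(a) / S.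
   By Gibbs' inequality (from ln x <= x - 1, with equality iff x = 1) the sum
   is at most 0, with equality iff M = q; so ln S / ln b is the maximum of
   H_RPS and it is attained exactly at q. *)

Section Gibbs.
Context {R : realType}.

Lemma ln_leif {x : R} : 0 < x -> ln x <= x - 1 ?= iff (x == 1).
Proof.
move=> x_gt0; split.
  by have := @le_ln1Dx R (x - 1); rewrite [1 + _]addrC subrK; apply; lra.
have [->|x_neq1] := eqVneq x 1; first by rewrite ln1 subrr eqxx.
have := @expR_gt1Dx R (ln x); rewrite lnK ?posrE // ln_eq0 // => /(_ x_neq1).
by move=> lt_x; rewrite lt_eqF //; lra.
Qed.

Definition xln_ratio (p q : R) : R := if p == 0 then 0 else p * ln (q / p).

Lemma xln_ratio_leif (p q : R) :
  0 <= p -> 0 < q -> xln_ratio p q <= q - p ?= iff (p == q).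
Proof.
rewrite /xln_ratio; have [-> _ q_gt0|p_neq0 p_ge0 q_gt0] := eqVneq p 0.
  by rewrite subr0; split; [exact: ltW|].
have p_gt0 : 0 < p by rewrite lt0r p_neq0.
have := ln_leif (divr_gt0 q_gt0 p_gt0).
rewrite -(mono_leif (ler_pM2l p_gt0)) mulrBr mulr1 mulrCA divff // mulr1.
by rewrite -(inj_eq (mulIf p_neq0)) mul1r divfK // eq_sym.
Qed.

Lemma gibbs_leif (I : finType) (P : pred I) (p q : I -> R) :
    (forall i, P i -> 0 <= p i) -> (forall i, P i -> 0 < q i) ->
    \sum_(i | P i) p i = \sum_(i | P i) q i ->
  \sum_(i | P i) xln_ratio (p i) (q i) <= 0 ?= iff [forall (i | P i), p i == q i].
Proof.
move=> p_ge0 q_gt0 sum_pq.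
suff : \sum_(i | P i) xln_ratio (p i) (q i) <= \sum_(i | P i) (q i - p i)
         ?= iff [forall (i | P i), p i == q i] by rewrite sumrB sum_pq subrr.
by apply: leif_sum => i Pi; apply: xln_ratio_leif; auto.
Qed.

End Gibbs.

Section PermutationEventSpace.
Context {T : finType}.
Local Notation N := #|T|.

Lemma card_PES_tag (i : 'I_N.+1) : #|[pred a : PES T | tag a == i]| = N ^_ i.
Proof.
pose tag_i (t : {t : i.-tuple T | uniq t}) : PES T := Tagged _ t.
have tag_i_inj : injective tag_i by move=> t t'; apply: eq_from_Tagged.
have -> : #|[pred a : PES T | tag a == i]| = #|tag_i @: predT|.
  apply: eq_card => a; rewrite inE /=; apply/idP/imsetP => [|[t _ ->]] //.
  by case: a => j t /= /eqP Eji; subst j; exists t.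
rewrite (card_imset predT tag_i_inj) card_sig -card_uniq_tuples.
by apply: eq_card => t; rewrite !inE all_predT.
Qed.

Lemma sum_PES_len (V : nmodType) (f : nat -> V) :
  \sum_(a : PES T) f (pes_len a) = \sum_(i < N.+1) f i *+ N ^_ i.
Proof.
rewrite (partition_big (fun a : PES T => tag a) predT) //=.
apply: eq_bigr => i _; rewrite -card_PES_tag -sumr_const.
by apply: eq_big => // a /eqP <-.
Qed.

Lemma Fi_ge2 (i : nat) : (0 < i)%N -> (2 <= Fi i)%N.
Proof.
case: i => // i _; rewrite /Fi big_ord_recl big_ord_recl /Pnk /= ffactn0 ffactn1.
lia.
Qed.

Lemma Ssum_gt0 : (0 < N)%N -> (0 < Ssum N)%N.
Proof.
by move=> N_gt0; rewrite /Ssum big_ltn // /Pnk ffactn1; have := Fi_ge2 1 isT; nia.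
Qed.

Context {R : realType}.

Definition pes_weight (a : PES T) : R := (Fi (pes_len a))%:R - 1.

Lemma pes_weight_gt0 {a : PES T} : (0 < pes_len a)%N -> 0 < pes_weight a.
Proof. by move/Fi_ge2; rewrite /pes_weight -(ler_nat R) => ?; lra. Qed.

Lemma sum_pes_weight :
  \sum_(a : PES T | (0 < pes_len a)%N) pes_weight a = (Ssum N)%:R.
Proof.
pose w (i : nat) : R := if (0 < i)%N then (Fi i)%:R - 1 else 0.
rewrite big_mkcond (eq_bigr (fun a => w (pes_len a))) // sum_PES_len.
rewrite big_ord_recl /w /= add0r /Ssum natr_sum big_add1 big_mkord /=.
apply: eq_bigr => i _; rewrite natrM natrB ?mulr_natl //.
by have := Fi_ge2 i.+1 isT; lia.
Qed.

Lemma PMF_sum_pos_len {M : PES T -> R} :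
  is_PMF M -> \sum_(a : PES T | (0 < pes_len a)%N) M a = 1.
Proof.
case=> _ M_len0 <-; rewrite [RHS](bigID (fun a : PES T => (0 < pes_len a)%N)) /=.
by rewrite [X in _ = _ + X]big1 ?addr0 // => a; rewrite lt0n negbK => /eqP /M_len0.
Qed.

Lemma is_PMF_nonneg (M : PES T -> R) :
    (forall a, 0 <= M a) -> (forall a, pes_len a = 0%N -> M a = 0) ->
    \sum_(a : PES T) M a = 1 ->
  is_PMF M.
Proof.
move=> M_ge0 M_len0 sumM; split=> // a; rewrite M_ge0 -sumM (bigD1 a) //= lerDl.
exact: sumr_ge0.
Qed.

Hypothesis N_gt0 : (0 < N)%N.
Local Notation S := ((Ssum N)%:R : R).

Lemma S_gt0 : 0 < S.
Proof. by rewrite ltr0n Ssum_gt0. Qed.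

Definition PMF_max (a : PES T) : R :=
  if (0 < pes_len a)%N then pes_weight a / S else 0.

Lemma is_PMF_max : is_PMF PMF_max.
Proof.
apply: is_PMF_nonneg => [a|a len0|].
- rewrite /PMF_max; case: ifP => // /pes_weight_gt0 w_gt0.
  by rewrite divr_ge0 ?ltW ?S_gt0.
- by rewrite /PMF_max len0.
- rewrite -big_mkcond /= -mulr_suml sum_pes_weight divff //.
  by rewrite gt_eqF ?S_gt0.
Qed.

Context {b : R}.
Hypothesis b_gt1 : 1 < b.

Lemma H_RPS_xln_ratio {M : PES T -> R} : is_PMF M ->
  ln b * H_RPS b M =
  ln S + \sum_(a : PES T | (0 < pes_len a)%N) xln_ratio (M a) (PMF_max a).
Proof.
move=> PMF_M; have [M01 _ _] := PMF_M; have lnb_gt0 := ln_gt0 b_gt1.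
have -> : ln S = \sum_(a : PES T | (0 < pes_len a)%N) ln S * M a.
  by rewrite -mulr_sumr PMF_sum_pos_len // mulr1.
rewrite -big_split /= /H_RPS mulrN mulr_sumr -sumrN; apply: eq_bigr => a a_pos.
rewrite /xln_ratio /PMF_max a_pos; case: eqVneq => [->|M_neq0].
  by rewrite mulr0 oppr0 mulr0 addr0.
have M_gt0 : 0 < M a by rewrite lt0r M_neq0; case/andP: (M01 a).
have w_gt0 := pes_weight_gt0 a_pos; have S_pos := S_gt0.
rewrite /logb -/(pes_weight a) !ln_div ?posrE ?divr_gt0 //.
by field; rewrite gt_eqF.
Qed.

Lemma H_RPS_leif {M : PES T -> R} : is_PMF M ->
  ln b * H_RPS b M <= ln S
    ?= iff [forall (a | (0 < pes_len a)%N), M a == PMF_max a].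
Proof.
move=> PMF_M; rewrite H_RPS_xln_ratio // -[X in _ <= X ?= iff _]addr0.
rewrite (mono_leif (lerD2l (ln S))); apply: gibbs_leif.
- by move=> a _; case: PMF_M => /(_ a) /andP[].
- by move=> a a_pos; rewrite /PMF_max a_pos divr_gt0 ?pes_weight_gt0 ?S_gt0.
- by rewrite !PMF_sum_pos_len //; exact: is_PMF_max.
Qed.

End PermutationEventSpace.

Theorem theorem3 (R : realType) (b : R) (T : finType)
  (hb : 1 < b) (hN : (0 < #|T|)%N) (M : PES T -> R) (hM : is_PMF M) :
  (forall M' : PES T -> R, is_PMF M' -> H_RPS b M' <= H_RPS b M) <->
  (forall a : PES T, (1 <= pes_len a)%N ->
     M a = ((Fi (pes_len a))%:R - 1) / (Ssum #|T|)%:R).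
Proof.
have lnb_gt0 := ln_gt0 hb.
have H_max : ln b * H_RPS b (PMF_max : PES T -> R) = ln (Ssum #|T|)%:R.
  apply: eqTleif (H_RPS_leif hN hb (is_PMF_max hN)) _.
  by apply/forall_inP => a _.
have [H_le H_eq] := H_RPS_leif hN hb hM.
split=> [maxM a a_pos | M_eq M' PMF_M'].
- have := maxM _ (is_PMF_max hN); rewrite -(ler_pM2l lnb_gt0) H_max => H_ge.
  move: H_eq; rewrite eq_le H_le H_ge => /esym/forall_inP/(_ a a_pos)/eqP.
  by rewrite /PMF_max a_pos.
- rewrite -(ler_pM2l lnb_gt0) (eqTleif (H_RPS_leif hN hb hM)).
    exact: (H_RPS_leif hN hb PMF_M').1.
  by apply/forall_inP => a a_pos; rewrite M_eq // /PMF_max a_pos.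
Qed.
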